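(* Let $K$ be a field, let $L\in K^{n\times n}[s]$, $L_1\in K^{n_1\times n_1}[s]$ be nonsingular polynomial matrices, let $\Theta,\Theta_1\in K^{n_1\times n}_\infty(s)$ satisfy $\Theta L=L_1\Theta_1$, and let $\phi:U^L\to U^{L_1}$ be the $K_\infty(s)$-module homomorphism given by $\phi(\rho^Lx)=\rho^{L_1}(\Theta x)$, $x\in K^n_\infty(s)$. Then: (i) $\phi$ is surjective if and only if there exist proper rational matrices $C\in K^{n\times n_1}_\infty(s)$, $D\in K^{n_1\times n_1}_\infty(s)$ with $\Theta C+s^{-1}L_1D=I_{n_1}$; (ii) $\phi$ is injective if and only if there exist proper rational matrices $C\in K^{n_1\times n}_\infty(s)$, $D\in K^{n\times n}_\infty(s)$ with $C\Theta_1+D\,s^{-1}L=I_n$ (equivalently, $\Theta_1^TC^T+s^{-1}L^TD^T=I_n$).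
   Context: $K(s)$ denotes the field of rational functions over $K$. A rational function $f$ is proper if $f=0$ or $f=p/q$ with $p,q\in K[s]$, $q\ne0$, $\deg p\le\deg q$; $K_\infty(s)$ is the ring of proper rational functions, and $K^n_\infty(s)$, $K^{m\times r}_\infty(s)$ denote vectors/matrices with proper rational entries. One has $K(s)=K[s]\oplus s^{-1}K_\infty(s)$; $\pi_+:K(s)\to K[s]$ denotes the projection onto the polynomial part along $s^{-1}K_\infty(s)$, extended entrywise to vectors and matrices. For a nonsingular $M\in K^{m\times m}[s]$, define $\rho^M:K^m_\infty(s)\to K^m[s]$ by $\rho^M x=M\,\pi_+(M^{-1}x)$ and $U^M=\operatorname{Im}\rho^M$, a $K_\infty(s)$-module via $q\cdot\rho^Mx=\rho^M(qx)$ (well defined since $\operatorname{Ker}\rho^M=K^m_\infty(s)\cap s^{-1}MK^m_\infty(s)$). *)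

From HB Require Import structures.
From mathcomp Require Import all_boot all_order all_algebra.
Set Implicit Arguments. Unset Strict Implicit. Unset Printing Implicit Defensive.
Import GRing.Theory.
Local Open Scope ring_scope.

Notation ratf K := {fraction {poly K}}.

Section Defs.
Variable K : fieldType.
Local Notation F := (ratf K).

Definition sF : F := tofrac 'X.

(* f is proper: f = 0 or f = p/q with q <> 0 and deg p <= deg q
   (for q <> 0, deg p <= deg q iff size p <= size q, also when p = 0). *)
Definition proper (f : F) : Prop :=
  f = 0 \/ exists p q : {poly K}, q != 0 /\ (size p <= size q)%N /\
                                 f = tofrac p / tofrac q.

Definition properMx m r (A : 'M[F]_(m, r)) : Prop := forall i j, proper (A i j).

(* pi_+ : polynomial part of a rational function.  For any representation
   f = p/q (q <> 0), the polynomial part along s^{-1}K_oo(s) is p %/ q;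
   we use the canonical representative of the fraction. *)
Definition pi_plus (f : F) : {poly K} :=
  let r := repr f in (\n_r %/ \d_r)%R.

Definition polyF m r (M : 'M[{poly K}]_(m, r)) : 'M[F]_(m, r) := map_mx (fun p : {poly K} => tofrac p) M.

Definition rho m (M : 'M[{poly K}]_m) (x : 'cV[F]_m) : 'cV[{poly K}]_m :=
  M *m map_mx pi_plus (invmx (polyF M) *m x).
End Defs.

From Pilot Require Import Defs.
From HB Require Import structures.
From mathcomp Require Import all_boot all_order all_algebra.
From mathcomp Require Import ring.
Import GRing.Theory.
Set Implicit Arguments. Unset Strict Implicit. Unset Printing Implicit Defensive.
Local Open Scope ring_scope.

(* K_oo(s) is a valuation ring of K(s): of f and f^-1 at least one is proper.
   For nonsingular M, rho^M x = 0 iff s M^-1 x is proper, so both parts become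
   statements about proper matrices.  For (i), surjectivity applied to the unit
   vectors yields C and D column by column.  For (ii), injectivity says that
   s L^-1 x is proper whenever x and s Theta1 L^-1 x are, and over a valuation
   ring this forces s L^-1 = C (s Theta1 L^-1) + D with C, D proper.  This
   factorization is built row by row: a row that is not proper is turned into a
   unit row by a change of variables invertible over K_oo(s) followed by the
   rescaling of one coordinate, and is then eliminated. *)

Local Notation "x %:F" := (@tofrac _ x).

Section ProperRationalFunctions.
Variable K : fieldType.
Local Notation F := (ratf K).
Local Notation s := (sF K).
Local Notation proper := (@Defs.proper K).

Lemma proper_frac (p q : {poly K}) :
  q != 0 -> (size p <= size q)%N -> proper (p%:F / q%:F).
Proof. by move=> q0 le_pq; right; exists p, q. Qed.

Lemma proper0 : proper (0 : F). Proof. by left. Qed.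

Lemma proper1 : proper (1 : F).
Proof. by rewrite -(divr1 1) -tofrac1; apply: proper_frac; rewrite ?oner_eq0. Qed.

Lemma properN f : proper f -> proper (- f).
Proof.
case=> [->|[p [q [q0 [le_pq ->]]]]]; first by rewrite oppr0; left.
by rewrite -mulNr -tofracN; apply: proper_frac; rewrite ?size_polyN.
Qed.

Lemma properD f g : proper f -> proper g -> proper (f + g).
Proof.
case=> [->|[p [q [q0 [le_pq ->]]]]]; first by rewrite add0r.
case=> [->|[p' [q' [q'0 [le_pq' ->]]]]]; first by rewrite addr0; right; exists p, q.
rewrite addf_div ?tofrac_eq0 // -!tofracM -tofracD.
apply: proper_frac; first by rewrite mulf_neq0.
rewrite size_mul // -subn1; apply: leq_trans (size_add _ _) _.
rewrite geq_max; apply/andP; split; apply: leq_trans (size_mul_leq _ _) _.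
  by rewrite -subn1 leq_sub2r // leq_add2r.
by rewrite -subn1 leq_sub2r // addnC leq_add2l.
Qed.

Lemma properB f g : proper f -> proper g -> proper (f - g).
Proof. by move=> pf pg; apply/properD/properN. Qed.

Lemma properM f g : proper f -> proper g -> proper (f * g).
Proof.
case=> [->|[p [q [q0 [le_pq ->]]]]]; first by rewrite mul0r; left.
case=> [->|[p' [q' [q'0 [le_pq' ->]]]]]; first by rewrite mulr0; left.
rewrite mulf_div -!tofracM; apply: proper_frac; first by rewrite mulf_neq0.
apply: leq_trans (size_mul_leq _ _) _.
by rewrite size_mul // -!subn1 leq_sub2r // leq_add.
Qed.

Lemma proper_sum (I : Type) (r : seq I) (P : pred I) (f : I -> F) :
  (forall i, P i -> proper (f i)) -> proper (\sum_(i <- r | P i) f i).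
Proof. by move=> pf; apply: (big_ind proper) => //; [exact: proper0 | exact: properD]. Qed.

Lemma sF_neq0 : s != 0.
Proof. by rewrite tofrac_eq0 polyX_eq0. Qed.

Lemma fracE (f : F) : f = (\n_(repr f))%:F / (\d_(repr f))%:F.
Proof.
apply: (canRL (mulfK _)); first by rewrite tofrac_eq0 denom_ratioP.
rewrite -{1}[f]reprK; move: (repr f) (denom_ratioP (repr f)) => r dr0.
unlock tofrac; rewrite -[_ * _]/(FracField.mul _ _) -FracField.pi_mul.
apply/eqmodP; rewrite /= FracField.equivfE /FracField.mulf.
by rewrite !numden_Ratio ?mulf_neq0 ?oner_eq0 // !mulr1 mulrC.
Qed.

Lemma proper_or_properV f : proper f \/ proper f^-1.
Proof.
rewrite (fracE f); move: (\n_ _) (\d_ _) (denom_ratioP (repr f)) => p q q0.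
have [le_pq|lt_qp] := leqP (size p) (size q); first by left; apply: proper_frac.
right; rewrite invf_div; apply: proper_frac; last exact: ltnW.
by rewrite -size_poly_gt0; apply: leq_ltn_trans lt_qp.
Qed.

Lemma proper_pivot (I : eqType) (h : I -> F) (r : seq I) :
  {in r, forall i, h i = 0} \/
  exists2 j, j \in r & h j != 0 /\ {in r, forall i, proper (h i / h j)}.
Proof.
elim: r => [|i r [r0|[j jr [hj0 hj]]]]; first by left.
- have [hi0|hi0] := eqVneq (h i) 0.
    by left=> k; rewrite inE => /predU1P[->|/r0].
  right; exists i; rewrite ?mem_head //; split=> // k /predU1P[->|/r0->].
    by rewrite divff //; exact: proper1.
  by rewrite mul0r; exact: proper0.
- have [hij|[hi0 hji]] : proper (h i / h j) \/ h i != 0 /\ proper (h j / h i).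
    have [->|hi0] := eqVneq (h i) 0; first by left; rewrite mul0r; exact: proper0.
    by case: (proper_or_properV (h i / h j)); [left | rewrite invf_div; right].
    by right; exists j; rewrite ?inE ?jr ?orbT //; split=> // k /predU1P[->|/hj].
  right; exists i; rewrite ?mem_head //; split=> // k /predU1P[->|/hj hkj].
    by rewrite divff //; exact: proper1.
  have -> : h k / h i = h k / h j * (h j / h i) by rewrite mulrA (divfK hj0).
  exact: properM hkj hji.
Qed.

Definition sproper f := proper (s * f).

Lemma sproper_frac (p q : {poly K}) :
  q != 0 -> (size p < size q)%N -> sproper (p%:F / q%:F).
Proof.
move=> q0 lt_pq; rewrite /sproper mulrA -tofracM.
have [->|p0] := eqVneq p 0; first by rewrite mulr0 tofrac0 mul0r; exact: proper0.
by apply: proper_frac; rewrite // mulrC size_mulX.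
Qed.

Lemma sproperB f g : sproper f -> sproper g -> sproper (f - g).
Proof. by rewrite /sproper mulrBr; apply: properB. Qed.

Lemma proper_poly (p : {poly K}) : proper p%:F -> (size p <= 1)%N.
Proof.
case=> [/eqP|[p' [q [q0 [le_pq epq]]]]].
  by rewrite tofrac_eq0 => /eqP ->; rewrite size_poly0.
have [->|p0] := eqVneq p 0; first by rewrite size_poly0.
have /eqP : (p * q)%:F = p'%:F by rewrite tofracM epq divfK ?tofrac_eq0.
rewrite tofrac_eq => /eqP epq'; move: le_pq.
by rewrite -epq' size_mul // -subn1 leq_subLR addnC [leqRHS]addnC leq_add2l.
Qed.

Lemma sproper_poly (p : {poly K}) : sproper p%:F -> p = 0.
Proof.
rewrite /sproper -tofracM mulrC => /proper_poly.
have [//|p0] := eqVneq p 0.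
by rewrite size_mulX // ltnS size_poly_leq0 (negPf p0).
Qed.

Lemma sproper_sub_pi_plus f : sproper (f - (pi_plus f)%:F).
Proof.
rewrite /pi_plus {1}(fracE f).
move: (\n_ _) (\d_ _) (denom_ratioP (repr f)) => p q q0.
rewrite {1}(divp_eq p q) tofracD tofracM mulrDl mulfK ?tofrac_eq0 // addrAC subrr add0r.
by apply: sproper_frac; rewrite ?ltn_modp.
Qed.

Lemma pi_plus_unique f p : sproper (f - p%:F) -> pi_plus f = p.
Proof.
move=> fp; apply/eqP; rewrite eq_sym -subr_eq0; apply/eqP/sproper_poly.
have -> : (p - pi_plus f)%:F = (f - (pi_plus f)%:F) - (f - p%:F).
  by rewrite tofracB [RHS]addrC opprB addrA subrK.
exact: sproperB (sproper_sub_pi_plus f) fp.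
Qed.

Lemma pi_plusB (f g : F) : pi_plus (f - g) = pi_plus f - pi_plus g.
Proof.
apply: pi_plus_unique.
have -> : f - g - (pi_plus f - pi_plus g)%:F
          = (f - (pi_plus f)%:F) - (g - (pi_plus g)%:F) by rewrite tofracB; ring.
exact: sproperB (sproper_sub_pi_plus f) (sproper_sub_pi_plus g).
Qed.

Lemma pi_plus_eq0 (f : F) : pi_plus f = 0 <-> sproper f.
Proof.
split=> [f0|fs]; last by apply: pi_plus_unique; rewrite tofrac0 subr0.
by have := sproper_sub_pi_plus f; rewrite f0 tofrac0 subr0.
Qed.

End ProperRationalFunctions.

Section ProperMatrices.
Variable K : fieldType.
Local Notation F := (ratf K).
Local Notation proper := (@Defs.proper K).

Lemma properMx0 m r : properMx (0 : 'M[F]_(m, r)).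
Proof. by move=> i j; rewrite mxE; exact: proper0. Qed.

Lemma properMx1 m : properMx (1%:M : 'M[F]_m).
Proof. by move=> i j; rewrite mxE; case: (i == j); [exact: proper1 | exact: proper0]. Qed.

Lemma properMx_delta m r i j : properMx (delta_mx i j : 'M[F]_(m, r)).
Proof. by move=> k l; rewrite mxE; case: (_ && _); [exact: proper1 | exact: proper0]. Qed.

Lemma properMxD m r (A B : 'M[F]_(m, r)) :
  properMx A -> properMx B -> properMx (A + B).
Proof. by move=> pA pB i j; rewrite mxE; apply: properD. Qed.

Lemma properMxB m r (A B : 'M[F]_(m, r)) :
  properMx A -> properMx B -> properMx (A - B).
Proof. by move=> pA pB i j; rewrite !mxE; apply: properB. Qed.

Lemma properMxZ m r c (A : 'M[F]_(m, r)) :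
  proper c -> properMx A -> properMx (c *: A).
Proof. by move=> pc pA i j; rewrite mxE; apply: properM. Qed.

Lemma properMxM m k r (A : 'M[F]_(m, k)) (B : 'M_(k, r)) :
  properMx A -> properMx B -> properMx (A *m B).
Proof. by move=> pA pB i j; rewrite mxE; apply: proper_sum => l _; apply: properM. Qed.

Lemma properMx_row_mx m r1 r2 (A : 'M[F]_(m, r1)) (B : 'M_(m, r2)) :
  properMx A -> properMx B -> properMx (row_mx A B).
Proof. by move=> pA pB i j; rewrite mxE; case: split_ordP => l _. Qed.

Lemma properMx_col_mx m1 m2 r (A : 'M[F]_(m1, r)) (B : 'M_(m2, r)) :
  properMx A -> properMx B -> properMx (col_mx A B).
Proof. by move=> pA pB i j; rewrite mxE; case: split_ordP => l _. Qed.

Lemma properMx_col m r (A : 'M[F]_(m, r)) :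
  (forall j, properMx (col j A)) -> properMx A.
Proof. by move=> pA i j; have := pA j i 0; rewrite mxE. Qed.

End ProperMatrices.

Section Rho.
Variable K : fieldType.
Local Notation F := (ratf K).
Local Notation s := (sF K).

Lemma polyF_unitmx m (M : 'M[{poly K}]_m) : \det M != 0 -> polyF M \in unitmx.
Proof. by move=> dM; rewrite unitmxE unitfE /polyF det_map_mx tofrac_eq0. Qed.

Lemma rhoB m (M : 'M[{poly K}]_m) (x y : 'cV[F]_m) :
  rho M (x - y) = rho M x - rho M y.
Proof.
rewrite /rho -mulmxBr; congr (_ *m _); rewrite mulmxBr.
by apply/matrixP=> i j; rewrite !mxE pi_plusB.
Qed.

Lemma rho_eq0 m (M : 'M[{poly K}]_m) (x : 'cV[F]_m) : \det M != 0 ->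
  rho M x = 0 <-> properMx (s *: (invmx (polyF M) *m x)).
Proof.
move=> dM; rewrite /rho; set w := map_mx _ _.
have -> : M *m w = 0 <-> w = 0.
  split=> [Mw0 | ->]; last by rewrite mulmx0.
  have : polyF M *m polyF w = 0.
    by rewrite /polyF -map_mxM Mw0; apply/matrixP=> i j; rewrite !mxE ?tofrac0.
  move/(congr1 (mulmx (invmx (polyF M)))).
  rewrite mulmxA mulVmx ?polyF_unitmx // mul1mx mulmx0 => /matrixP w0.
  by apply/matrixP=> i j; move: (w0 i j); rewrite !mxE => /eqP; rewrite tofrac_eq0 => /eqP.
split=> [/matrixP w0 i j | pw].
  by rewrite mxE; apply/pi_plus_eq0; move: (w0 i j); rewrite !mxE.
apply/matrixP=> i j; rewrite mxE [RHS]mxE; apply/pi_plus_eq0.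
by move: (pw i j); rewrite mxE.
Qed.

Lemma rho_eq m (M : 'M[{poly K}]_m) (x y : 'cV[F]_m) : \det M != 0 ->
  rho M x = rho M y <-> properMx (s *: (invmx (polyF M) *m (x - y))).
Proof.
move=> dM; rewrite -rho_eq0 // rhoB.
by split=> [->|/eqP]; [rewrite subrr | rewrite subr_eq0 => /eqP].
Qed.

End Rho.

Section ProperFactorization.
Variable K : fieldType.
Local Notation F := (ratf K).
Local Notation proper := (@Defs.proper K).

Definition proper_on_preimage k n m (R : 'M[F]_(k, n)) (T : 'M[F]_(m, n)) :=
  forall x : 'cV_n, properMx x -> properMx (R *m x) -> properMx (T *m x).

Lemma proper_on_preimage_col_mx k n m (r : 'rV[F]_n) (R : 'M_(k, n))
    (T : 'M_(m, n)) (W : 'M_n) :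
  properMx W -> properMx (r *m W) ->
  proper_on_preimage (col_mx r R) T -> proper_on_preimage (R *m W) (T *m W).
Proof.
move=> pW prW hT x px; rewrite -!mulmxA => pRx; apply: hT; first exact: properMxM.
by rewrite mul_col_mx; apply: properMx_col_mx; rewrite // mulmxA; apply: properMxM.
Qed.

Lemma row_proper_or_pivot n (r : 'rV[F]_n) :
  properMx r \/
  exists j, [/\ r 0 j != 0, proper (r 0 j)^-1 & forall k, proper (r 0 k / r 0 j)].
Proof.
have [r0|[j _ [a0 pr]]] := proper_pivot (r 0) (enum 'I_n).
  by left=> i k; rewrite (ord1 i) r0 ?mem_enum //; exact: proper0.
have {}pr k : proper (r 0 k / r 0 j) by apply: pr; rewrite mem_enum.
have [pa|paV] := proper_or_properV (r 0 j); last by right; exists j.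
by left=> i k; rewrite (ord1 i) -(divfK a0 (r 0 k)); apply: properM.
Qed.

Lemma row_pivot_unimodular n (r : 'rV[F]_n) j :
  r 0 j != 0 -> (forall k, proper (r 0 k / r 0 j)) ->
  exists V Vi : 'M[F]_n, [/\ properMx V, properMx Vi, V *m Vi = 1%:M
                          & r *m V = r 0 j *: delta_mx 0 j].
Proof.
set a := r 0 j => a0 pr; pose u : 'cV[F]_n := delta_mx j 0.
pose w := a^-1 *: r - u^T.
have ru : r *m u = a%:M by rewrite -colE [col j r]mx11_scalar mxE.
have uTu : u^T *m u = 1%:M by rewrite trmx_delta mul_delta_mx [LHS]mx11_scalar mxE.
have wu : w *m u = 0.
  by rewrite mulmxBl -scalemxAl ru uTu scale_scalar_mx mulVf // subrr.
have pw : properMx w.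
  apply: properMxB; last by rewrite trmx_delta; exact: properMx_delta.
  by move=> i k; rewrite mxE (ord1 i) mulrC.
have rV : r *m (1%:M - u *m w) = a *: delta_mx 0 j.
  rewrite mulmxBr mulmx1 mulmxA ru mul_scalar_mx scalerBr scalerA mulfV // scale1r.
  by rewrite opprB addrC subrK trmx_delta.
clearbody w; exists (1%:M - u *m w), (1%:M + u *m w); split=> //.
- by apply: properMxB; [exact: properMx1 | apply: properMxM; [exact: properMx_delta|]].
- by apply: properMxD; [exact: properMx1 | apply: properMxM; [exact: properMx_delta|]].
by rewrite mulmxBl mul1mx mulmxDr mulmx1 -mulmxA (mulmxA w) wu mul0mx mulmx0 addr0 addrK.
Qed.

Lemma row_pivot_normalize n (r : 'rV[F]_n) j :
  r 0 j != 0 -> proper (r 0 j)^-1 -> (forall k, proper (r 0 k / r 0 j)) ->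
  exists W : 'M[F]_n, [/\ properMx W, r *m W = delta_mx 0 j
    & forall m (G : 'M_(m, n)), properMx (G *m W) ->
        exists2 c : 'cV_m, properMx c & properMx (G - c *m r)].
Proof.
move=> a0 paV pr; have [V [Vi [pV pVi VVi rV]]] := row_pivot_unimodular a0 pr.
set a := r 0 j in a0 paV rV; set P : 'M[F]_n := delta_mx j j.
pose D := 1%:M - P + a^-1 *: P.
have PP : P *m P = P by rewrite mul_delta_mx.
have DP : D *m P = a^-1 *: P.
  by rewrite mulmxDl mulmxBl mul1mx PP subrr add0r -scalemxAl PP.
have D1P : D *m (1%:M - P) = 1%:M - P by rewrite mulmxBr mulmx1 DP addrK.
have p1P : properMx (1%:M - P).
  by apply: properMxB; [exact: properMx1 | exact: properMx_delta].
exists (V *m D); split.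
- apply: properMxM => //; apply: properMxD => //.
  by apply: properMxZ => //; exact: properMx_delta.
- rewrite mulmxA rV -scalemxAl mulmxDr mulmxBr mulmx1 mul_delta_mx subrr add0r.
  by rewrite -scalemxAr mul_delta_mx scalerA mulfV // scale1r.
move=> m G pGW; pose c : 'cV_m := G *m (V *m D) *m delta_mx j 0.
have pc : properMx c by apply: properMxM => //; exact: properMx_delta.
have crV : c *m r *m V = G *m V *m P.
  rewrite -(mulmxA _ r V) rV -scalemxAr -!mulmxA mul_delta_mx DP !scalemxAr.
  by rewrite scalerA mulfV // scale1r mulmxA.
clearbody c; exists c => //.
have -> : G - c *m r = (G *m V - G *m V *m P) *m Vi.
  by rewrite -crV -mulmxBl -mulmxA VVi mulmx1.
have -> : G *m V - G *m V *m P = G *m (V *m D) *m (1%:M - P).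
  by rewrite -!mulmxA D1P mulmxBr mulmx1 mulmxBr.
by apply: properMxM => //; apply: properMxM.
Qed.

Lemma proper_on_preimage_factor k n m (R : 'M[F]_(k, n)) (T : 'M[F]_(m, n)) :
  proper_on_preimage R T ->
  exists2 C : 'M_(m, k), properMx C & properMx (T - C *m R).
Proof.
elim: k R T => [|k IH] R T hT.
  exists 0; first exact: properMx0.
  rewrite mul0mx subr0; apply: properMx_col => j; rewrite colE.
  by apply: hT => [|[]//]; exact: properMx_delta.
rewrite -[R](@vsubmxK _ 1 k) in hT *; move: (usubmx _) (dsubmx _) hT => r {}R hT.
have [pr|[j [a0 paV pr]]] := row_proper_or_pivot r.
  have /IH[C pC pTC] : proper_on_preimage R T.
    rewrite -[R]mulmx1 -[T]mulmx1; apply: proper_on_preimage_col_mx hT.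
      exact: properMx1.
    by rewrite mulmx1.
  exists (row_mx (0 : 'cV_m) C); first exact (properMx_row_mx (@properMx0 K m 1) pC).
  by rewrite (mul_row_col (0 : 'cV_m) C r R) mul0mx add0r.
have [W [pW rW reduce]] := row_pivot_normalize a0 paV pr.
have /IH[C pC pTCW] : proper_on_preimage (R *m W) (T *m W).
  by apply: proper_on_preimage_col_mx hT; rewrite ?rW //; exact: properMx_delta.
have [c pc pTCc] : exists2 c : 'cV_m, properMx c & properMx (T - C *m R - c *m r).
  by apply: reduce; rewrite mulmxBl -mulmxA.
exists (row_mx c C); first exact (properMx_row_mx pc pC).
by rewrite (mul_row_col c C r R) opprD addrA addrAC.
Qed.

End ProperFactorization.

Section Phi.
Variables (K : fieldType) (n n1 : nat).
Variables (L : 'M[{poly K}]_n) (L1 : 'M[{poly K}]_n1) (Theta Theta1 : 'M[ratf K]_(n1, n)).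
Hypotheses (dL : \det L != 0) (dL1 : \det L1 != 0).
Hypothesis intertwine : Theta *m polyF L = polyF L1 *m Theta1.
Local Notation F := (ratf K).
Local Notation s := (sF K).

Lemma rho_surjective_coprime :
  (forall y : 'cV[F]_n1, properMx y ->
     exists x : 'cV[F]_n, properMx x /\ rho L1 (Theta *m x) = rho L1 y) ->
  exists (C : 'M[F]_(n, n1)) (D : 'M[F]_n1),
    properMx C /\ properMx D /\ Theta *m C + s^-1 *: (polyF L1 *m D) = 1%:M.
Proof.
move=> surj; have /fin_all_exists[X pX] : forall j : 'I_n1, exists x : 'cV_n,
    properMx x /\ rho L1 (Theta *m x) = rho L1 (delta_mx j 0).
  by move=> j; apply: surj; exact: properMx_delta.
pose Xm := \matrix_(i, j) X j i 0.
have XmE j : Xm *m delta_mx j 0 = X j.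
  by rewrite -colE; apply/matrixP=> i k; rewrite !mxE (ord1 k).
exists Xm, (s *: (invmx (polyF L1) *m (1%:M - Theta *m Xm))); split; [|split].
- apply: properMx_col => j; rewrite colE XmE; exact: (pX j).1.
- apply: properMx_col => j; rewrite colE -scalemxAl -mulmxA mulmxBl mul1mx -mulmxA XmE.
  by apply/(rho_eq _ _ dL1); rewrite (pX j).2.
rewrite -scalemxAr scalerA mulVf ?sF_neq0 // scale1r mulmxA mulmxV ?polyF_unitmx //.
by rewrite mul1mx addrC subrK.
Qed.

Lemma coprime_rho_surjective (C : 'M[F]_(n, n1)) (D : 'M[F]_n1) :
  properMx C -> properMx D -> Theta *m C + s^-1 *: (polyF L1 *m D) = 1%:M ->
  forall y : 'cV[F]_n1, properMx y ->
    exists x : 'cV[F]_n, properMx x /\ rho L1 (Theta *m x) = rho L1 y.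
Proof.
move=> pC pD CD y py; exists (C *m y); split; first exact: properMxM.
symmetry; apply/(rho_eq _ _ dL1).
rewrite -{1}[y]mul1mx -CD mulmxDl mulmxA addrAC subrr add0r.
rewrite -scalemxAl -scalemxAr scalerA mulfV ?sF_neq0 // scale1r !mulmxA.
by rewrite mulVmx ?polyF_unitmx // mul1mx; exact: properMxM.
Qed.

Lemma rho_Theta_eq (x x' : 'cV[F]_n) :
  rho L1 (Theta *m x) = rho L1 (Theta *m x') <->
  properMx (s *: (Theta1 *m (invmx (polyF L) *m (x - x')))).
Proof.
have Linv : invmx (polyF L1) *m Theta = Theta1 *m invmx (polyF L).
  apply: (canRL (mulmxK (polyF_unitmx dL))); rewrite -mulmxA intertwine mulmxA.
  by rewrite mulVmx ?polyF_unitmx // mul1mx.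
by rewrite rho_eq // -mulmxBr mulmxA Linv -mulmxA.
Qed.

Lemma rho_injective_coprime :
  (forall x x' : 'cV[F]_n, properMx x -> properMx x' ->
     rho L1 (Theta *m x) = rho L1 (Theta *m x') -> rho L x = rho L x') ->
  exists (C : 'M[F]_(n, n1)) (D : 'M[F]_n),
    properMx C /\ properMx D /\ C *m Theta1 + D *m (s^-1 *: polyF L) = 1%:M.
Proof.
move=> inj; have /proper_on_preimage_factor[C pC pD] :
    proper_on_preimage (Theta1 *m (s *: invmx (polyF L))) (s *: invmx (polyF L)).
  move=> x px pRx; rewrite -scalemxAl.
  have := inj x 0 px (@properMx0 K n 1); rewrite (rho_eq _ _ dL) rho_Theta_eq !subr0.
  by apply; rewrite scalemxAr scalemxAl mulmxA.
exists C, (s *: invmx (polyF L) - C *m (Theta1 *m (s *: invmx (polyF L)))).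
split=> //; split=> //.
have sLL : s *: invmx (polyF L) *m (s^-1 *: polyF L) = 1%:M.
  rewrite -scalemxAl -scalemxAr scalerA mulfV ?sF_neq0 // scale1r.
  by rewrite mulVmx ?polyF_unitmx.
by rewrite mulmxBl sLL -!mulmxA sLL mulmx1 addrC subrK.
Qed.

Lemma coprime_rho_injective (C : 'M[F]_(n, n1)) (D : 'M[F]_n) :
  properMx C -> properMx D -> C *m Theta1 + D *m (s^-1 *: polyF L) = 1%:M ->
  forall x x' : 'cV[F]_n, properMx x -> properMx x' ->
    rho L1 (Theta *m x) = rho L1 (Theta *m x') -> rho L x = rho L x'.
Proof.
move=> pC pD CD x x' px px' /rho_Theta_eq pz; apply/(rho_eq _ _ dL).
rewrite -[s *: _]mul1mx -CD mulmxDl -!mulmxA -scalemxAr.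
have -> : s^-1 *: polyF L *m (s *: (invmx (polyF L) *m (x - x'))) = x - x'.
  rewrite -scalemxAl -scalemxAr scalerA mulVf ?sF_neq0 // scale1r.
  by rewrite mulmxA mulmxV ?polyF_unitmx // mul1mx.
by apply: properMxD; apply: properMxM => //; exact: properMxB.
Qed.

End Phi.

Theorem theorem3p5 (K : fieldType) (n n1 : nat)
  (L : 'M[{poly K}]_n) (L1 : 'M[{poly K}]_n1)
  (Theta Theta1 : 'M[ratf K]_(n1, n)) :
  \det L != 0 -> \det L1 != 0 ->
  properMx Theta -> properMx Theta1 ->
  Theta *m polyF L = polyF L1 *m Theta1 ->
  ((forall y : 'cV[ratf K]_n1, properMx y ->
      exists x : 'cV[ratf K]_n, properMx x /\ rho L1 (Theta *m x) = rho L1 y)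
   <->
   (exists (C : 'M[ratf K]_(n, n1)) (D : 'M[ratf K]_n1),
      properMx C /\ properMx D /\
      Theta *m C + (sF K)^-1 *: (polyF L1 *m D) = 1%:M))
  /\
  ((forall x x' : 'cV[ratf K]_n, properMx x -> properMx x' ->
      rho L1 (Theta *m x) = rho L1 (Theta *m x') -> rho L x = rho L x')
   <->
   (exists (C : 'M[ratf K]_(n, n1)) (D : 'M[ratf K]_n),
      properMx C /\ properMx D /\
      C *m Theta1 + D *m ((sF K)^-1 *: polyF L) = 1%:M)).
Proof.
(* The properness of Theta and Theta1 is only needed for phi to be well defined. *)
move=> dL dL1 _ _ intertwine; split; split.
- exact: rho_surjective_coprime.
- by case=> [C [D [pC [pD CD]]]]; exact: coprime_rho_surjective pC pD CD.
- exact: rho_injective_coprime.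
by case=> [C [D [pC [pD CD]]]]; exact: coprime_rho_injective pC pD CD.
Qed.
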